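(* Let $\mathcal{C}$ be a (small) category and let $\mathcal{C}_{bi}$ be the associated trivial double category. Then the two natural maps $N\mathcal{C}=N(\mathcal{C}_{bi})_h\to \operatorname{diag}(N\mathcal{C}_{bi})$ and $N\mathcal{C}=N(\mathcal{C}_{bi})_v\to\operatorname{diag}(N\mathcal{C}_{bi})$ represent the same morphism in the homotopy category of simplicial sets.
   Context: A double category $\mathcal{C}$ consists of a category $\mathcal{C}_h$ (maps called $h$-maps), a category $\mathcal{C}_v$ with the same objects (maps called $v$-maps), and a collection of squares with $h$-maps horizontal and $v$-maps vertical, called bicommutative squares, containing all squares with identity horizontal sides and equal vertical sides and all squares with identity vertical sides and equal horizontal sides, and closed under horizontal and vertical pasting. The nerve $N\mathcal{C}$ is the bisimplicial set whose $(p,q)$-simplices are $p\times q$ arrays of bicommutative squares, i.e. grids with $p$ $h$-arrows in each row and $q$ $v$-arrows in each column, all unit squares bicommutative, with faces and degeneracies given by composing/deleting or inserting identities in the evident way. Its $0$th column $N\mathcal{C}_{*,0}$ is the ordinary nerve $N\mathcal{C}_h$ and its $0$th row $N\mathcal{C}_{0,*}$ is $N\mathcal{C}_v$; the two maps in question are the inclusions of the $0$th column and $0$th row into the diagonal simplicial set $\operatorname{diag}(N\mathcal{C})$ (sending an $n$-simplex to the degenerate array obtained by applying degeneracies in the other direction). For an ordinary category $\mathcal{C}$, $\mathcal{C}_{bi}$ is the double category with $(\mathcal{C}_{bi})_h=(\mathcal{C}_{bi})_v=\mathcal{C}$ and bicommutative squares the commutative squares of $\mathcal{C}$. *)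

From Stdlib Require Import FunctionalExtensionality ProofIrrelevance Relations.
From mathcomp Require Import all_boot.
Set Implicit Arguments. Unset Strict Implicit. Unset Printing Implicit Defensive.

(* Categories (universe polymorphic, so that the target category of a *)
(* functor out of sSet may live in any universe).                     *)
#[universes(polymorphic)]
Record Category := {
  Ob : Type;
  Hom : Ob -> Ob -> Type;
  idc : forall a, Hom a a;
  compc : forall a b c, Hom b c -> Hom a b -> Hom a c;
  comp1c : forall a b (f : Hom a b), compc (idc b) f = f;
  compc1 : forall a b (f : Hom a b), compc f (idc a) = f;
  compcA : forall a b c d (f : Hom a b) (g : Hom b c) (h : Hom c d),
      compc h (compc g f) = compc (compc h g) f }.
Arguments Hom {_} a b.
Arguments idc {_} a.
Arguments compc {_ a b c} g f.

Record DMap (m n : nat) := {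
  dmap :> 'I_m.+1 -> 'I_n.+1;
  dmono : forall i j : 'I_m.+1, (i <= j)%N -> (dmap i <= dmap j)%N }.
Arguments dmono {m n} d i j _.

Definition did n : DMap n n := @Build_DMap n n (fun i => i) (fun i j h => h).
Definition dcomp l m n (g : DMap m n) (f : DMap l m) : DMap l n :=
  @Build_DMap l n (fun i => g (f i))
    (fun i j h => dmono g (f i) (f j) (dmono f i j h)).

Lemma DMap_eq m n (f g : DMap m n) : (forall i, f i = g i) -> f = g.
Proof.
case: f g => f hf [g hg] /= H.
have E : f = g by apply: functional_extensionality.
subst g; by rewrite (proof_irrelevance _ hf hg).
Qed.

Record sSet := {
  sx :> nat -> Type;
  sact : forall m n, DMap m n -> sx n -> sx m;
  sact_id : forall n (x : sx n), sact (did n) x = x;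
  sact_comp : forall l m n (f : DMap l m) (g : DMap m n) (x : sx n),
      sact (dcomp g f) x = sact f (sact g x) }.
Arguments sact {s m n} f x.

Record sMap (X Y : sSet) := {
  smap :> forall n, X n -> Y n;
  snat : forall m n (f : DMap m n) (x : X n), smap (sact f x) = sact f (smap x) }.
Arguments smap {X Y} s {n} x.

Definition sid (X : sSet) : sMap X X :=
  @Build_sMap X X (fun n x => x) (fun m n f x => erefl).
Definition scomp (X Y Z : sSet) (g : sMap Y Z) (f : sMap X Y) : sMap X Z :=
  @Build_sMap X Z (fun n x => g n (f n x))
    (fun m n h x => etrans (f_equal (smap g) (snat f h x)) (snat g h (f n x))).

Definition Delta (n : nat) : sSet.
Proof.
refine (@Build_sSet (fun m => DMap m n) (fun l m f g => dcomp g f) _ _).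
- by move=> m g; apply: DMap_eq.
- by move=> l m k f g x; apply: DMap_eq.
Defined.

Definition in_horn n (k : 'I_n.+1) m (f : DMap m n) : Prop :=
  exists i : 'I_n.+1, i != k /\ forall j, f j != i.

Lemma in_horn_act n (k : 'I_n.+1) l m (f : DMap l m) (g : DMap m n) :
  in_horn k g -> in_horn k (dcomp g f).
Proof. by case=> i [ik H]; exists i; split=> // j; exact: H. Qed.

Lemma sig_eq_pi (A : Type) (P : A -> Prop) (y z : {a | P a}) :
  proj1_sig y = proj1_sig z -> y = z.
Proof. case: y z => a pa [b pb] /= E; subst b; by rewrite (proof_irrelevance _ pa pb). Qed.

Definition Horn n (k : 'I_n.+1) : sSet.
Proof.
refine (@Build_sSet (fun m => {f : DMap m n | in_horn k f})
  (fun l m f y => exist _ (dcomp (proj1_sig y) f) (in_horn_act f (proj2_sig y))) _ _).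
- by move=> m y; apply: sig_eq_pi; apply: DMap_eq.
- by move=> l m p f g y; apply: sig_eq_pi; apply: DMap_eq.
Defined.

Definition Kan (K : sSet) : Prop :=
  forall n (k : 'I_n.+1), (0 < n)%N ->
  forall h : sMap (Horn k) K,
  exists e : sMap (Delta n) K,
    forall m (y : Horn k m), smap e (proj1_sig y) = smap h y.

Definition Prod (X Y : sSet) : sSet.
Proof.
refine (@Build_sSet (fun n => (X n * Y n)%type)
  (fun m n f xy => (sact f xy.1, sact f xy.2)) _ _).
- by move=> n [x y] /=; rewrite !sact_id.
- by move=> l m n f g [x y] /=; rewrite !sact_comp.
Defined.

Definition cst0 n : DMap n 1 := @Build_DMap n 1 (fun _ => ord0) (fun _ _ _ => leqnn _).
Definition cst1 n : DMap n 1 := @Build_DMap n 1 (fun _ => ord_max) (fun _ _ _ => leqnn _).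

Definition homotopic (X K : sSet) (f g : sMap X K) : Prop :=
  exists H : sMap (Prod X (Delta 1)) K,
    (forall n (x : X n), smap H ((x, cst0 n) : Prod X (Delta 1) n) = smap f x) /\
    (forall n (x : X n), smap H ((x, cst1 n) : Prod X (Delta 1) n) = smap g x).

Definition hrel (X K : sSet) : relation (sMap X K) :=
  clos_refl_sym_trans (sMap X K) (@homotopic X K).

Definition weq (A B : sSet) (w : sMap A B) : Prop :=
  forall K : sSet, Kan K ->
    (forall h : sMap A K, exists h' : sMap B K, hrel (scomp h' w) h) /\
    (forall a b : sMap B K, hrel (scomp a w) (scomp b w) -> hrel a b).

#[universes(polymorphic)]
Record sFunctor (D : Category) := {
  Fob : sSet -> Ob D;
  Fmap : forall X Y : sSet, sMap X Y -> Hom (Fob X) (Fob Y);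
  Fmap_id : forall X, Fmap (sid X) = idc (Fob X);
  Fmap_comp : forall X Y Z (f : sMap X Y) (g : sMap Y Z),
      Fmap (scomp g f) = compc (Fmap g) (Fmap f) }.
Arguments Fmap {D} _ {X Y} f.

#[universes(polymorphic)]
Definition is_iso (D : Category) (a b : Ob D) (f : Hom a b) : Prop :=
  exists g : Hom b a, compc g f = idc a /\ compc f g = idc b.

(* f and g represent the same morphism of the homotopy category: every
   functor inverting weak equivalences identifies them. *)
#[universes(polymorphic)]
Definition Ho_eq (X Y : sSet) (f g : sMap X Y) : Prop :=
  forall (D : Category) (F : sFunctor D),
    (forall (A B : sSet) (w : sMap A B), weq w -> is_iso (Fmap F w)) ->
    Fmap F f = Fmap F g.

Record PFun (C : Category) (I : Type) (le : I -> I -> bool) := {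
  pob : I -> Ob C;
  parr : forall i j, le i j -> Hom (pob i) (pob j);
  parr_id : forall i (h : le i i), parr h = idc (pob i);
  parr_comp : forall i j k (h1 : le i j) (h2 : le j k) (h3 : le i k),
      parr h3 = compc (parr h2) (parr h1) }.
Arguments pob {C I le} p i.
Arguments parr {C I le} p {i j} h.

Definition prestrict (C : Category) I J (leI : I -> I -> bool) (leJ : J -> J -> bool)
  (phi : J -> I) (hphi : forall i j, leJ i j -> leI (phi i) (phi j))
  (P : PFun C leI) : PFun C leJ :=
  {| pob := fun j => pob P (phi j);
     parr := fun i j h => parr P (hphi i j h);
     parr_id := fun i h => parr_id P (hphi i i h);
     parr_comp := fun i j k h1 h2 h3 =>
        parr_comp P (hphi _ _ h1) (hphi _ _ h2) (hphi _ _ h3) |}.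
Arguments prestrict {C I J leI leJ} phi hphi P.

Lemma PFun_ext (C : Category) I (le : I -> I -> bool) (o : I -> Ob C)
  (a b : forall i j, le i j -> Hom (o i) (o j)) pa pb qa qb :
  (forall i j h, a i j h = b i j h) ->
  @Build_PFun C I le o a pa qa = @Build_PFun C I le o b pb qb.
Proof.
move=> H.
have E : a = b.
  apply: functional_extensionality_dep => i.
  apply: functional_extensionality_dep => j.
  apply: functional_extensionality_dep => h; exact: H.
subst b; by rewrite (proof_irrelevance _ pa pb) (proof_irrelevance _ qa qb).
Qed.

Lemma prestrict_id (C : Category) I (le : I -> I -> bool)
  (h : forall i j, le i j -> le i j) (P : PFun C le) :
  prestrict (fun i => i) h P = P.
Proof.
case: P h => o a pa qa h /=; apply: PFun_ext => i j e.
by rewrite (eq_irrelevance (h i j e) e).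
Qed.

Lemma prestrict_idP (C : Category) I (le : I -> I -> bool) (phi : I -> I)
  (h : forall i j, le i j -> le (phi i) (phi j)) (P : PFun C le) :
  (forall i, phi i = i) -> prestrict phi h P = P.
Proof.
move=> E; have E' : phi = (fun i => i) by apply: functional_extensionality.
subst phi; exact: prestrict_id.
Qed.

Lemma prestrict_comp (C : Category) I J K (leI : I -> I -> bool)
  (leJ : J -> J -> bool) (leK : K -> K -> bool) (phi : J -> I) (psi : K -> J)
  (hphi : forall i j, leJ i j -> leI (phi i) (phi j))
  (hpsi : forall i j, leK i j -> leJ (psi i) (psi j))
  (hc : forall i j, leK i j -> leI (phi (psi i)) (phi (psi j)))
  (P : PFun C leI) :
  prestrict psi hpsi (prestrict phi hphi P)
  = prestrict (fun k => phi (psi k)) hc P :> PFun C leK.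
Proof.
case: P hphi hc => o a pa qa hphi hc /=; apply: PFun_ext => i j e /=.
by rewrite (eq_irrelevance (hphi _ _ (hpsi i j e)) (hc i j e)).
Qed.

Definition ordle n (i j : 'I_n.+1) : bool := (i <= j)%N.

Definition Nerve (C : Category) : sSet.
Proof.
refine (@Build_sSet (fun n => PFun C (@ordle n))
  (fun m n f x => prestrict f (dmono f) x) _ _).
- by move=> n x; apply: prestrict_id.
- move=> l m n f g x.
  symmetry; exact: (prestrict_comp (phi:=dmap g) (psi:=dmap f) _ _ (dmono (dcomp g f))).
Defined.

Record bsSet := {
  bx :> nat -> nat -> Type;
  bact : forall p q p' q', DMap p' p -> DMap q' q -> bx p q -> bx p' q';
  bact_id : forall p q (x : bx p q), bact (did p) (did q) x = x;
  bact_comp : forall p q p' q' p'' q'' (f : DMap p'' p') (g : DMap p' p)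
      (f' : DMap q'' q') (g' : DMap q' q) (x : bx p q),
      bact (dcomp g f) (dcomp g' f') x = bact f f' (bact g g' x) }.
Arguments bact {b p q p' q'} f g x.

Definition diag (X : bsSet) : sSet.
Proof.
refine (@Build_sSet (fun n => X n n) (fun m n f x => bact f f x) _ _).
- by move=> n x; apply: bact_id.
- by move=> l m n f g x; apply: bact_comp.
Defined.

(* The nerve of the double category C_bi: (p,q)-simplices are p x q
   arrays of commutative squares of C, i.e. functors [p] x [q] -> C. *)
Definition gridle p q (a b : 'I_p.+1 * 'I_q.+1) : bool :=
  ((a.1 <= b.1)%N && (a.2 <= b.2)%N).

Lemma grid_mono p q p' q' (f : DMap p' p) (g : DMap q' q)
  (a b : 'I_p'.+1 * 'I_q'.+1) :
  gridle a b -> gridle (f a.1, g a.2) (f b.1, g b.2).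
Proof. by case/andP=> h1 h2; rewrite /gridle /= (dmono f _ _ h1) (dmono g _ _ h2). Qed.

Definition NCbi (C : Category) : bsSet.
Proof.
refine (@Build_bsSet (fun p q => PFun C (@gridle p q))
  (fun p q p' q' f g x => prestrict _ (@grid_mono p q p' q' f g) x) _ _).
- by move=> p q x; apply: prestrict_idP => -[i j].
- move=> p q p' q' p'' q'' f g f' g' x.
  symmetry; exact: (prestrict_comp
    (phi:=fun a : 'I_p'.+1 * 'I_q'.+1 => (g a.1, g' a.2))
    (psi:=fun a : 'I_p''.+1 * 'I_q''.+1 => (f a.1, f' a.2)) _ _
    (@grid_mono p q p'' q'' (dcomp g f) (dcomp g' f'))).
Defined.

(* The two natural maps N C -> diag(N C_bi): an n-simplex x of N C is
   sent to the degenerate (n,n)-array obtained by applying the vertical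
   (resp. horizontal) degeneracy [n] -> [0] to x viewed in the 0th
   column (resp. 0th row): the grid (i,j) |-> x i (resp. x j). *)
Lemma fst_mono n (a b : 'I_n.+1 * 'I_n.+1) : gridle a b -> ordle a.1 b.1.
Proof. by case/andP. Qed.
Lemma snd_mono n (a b : 'I_n.+1 * 'I_n.+1) : gridle a b -> ordle a.2 b.2.
Proof. by case/andP. Qed.

Lemma prestrict_pi (C : Category) I J (leI : I -> I -> bool) (leJ : J -> J -> bool)
  (phi : J -> I) (h1 h2 : forall i j, leJ i j -> leI (phi i) (phi j))
  (P : PFun C leI) :
  prestrict phi h1 P = prestrict phi h2 P :> PFun C leJ.
Proof.
case: P => o a pa qa /=; apply: PFun_ext => i j e.
by rewrite (eq_irrelevance (h1 i j e) (h2 i j e)).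
Qed.

Definition incl_h (C : Category) : sMap (Nerve C) (diag (NCbi C)).
Proof.
refine (@Build_sMap (Nerve C) (diag (NCbi C))
  (fun n x => prestrict _ (@fst_mono n) x) _).
move=> m n f x /=.
rewrite (prestrict_comp (phi:=dmap f) (psi:=fun a : 'I_m.+1 * 'I_m.+1 => a.1) _ _
          (fun a b h => dmono f _ _ (@fst_mono m a b h))).
rewrite (prestrict_comp (phi:=fun a : 'I_n.+1 * 'I_n.+1 => a.1)
          (psi:=fun a : 'I_m.+1 * 'I_m.+1 => (f a.1, f a.2)) _ _
          (fun a b h => dmono f _ _ (@fst_mono m a b h))).
by [].
Defined.

Definition incl_v (C : Category) : sMap (Nerve C) (diag (NCbi C)).
Proof.
refine (@Build_sMap (Nerve C) (diag (NCbi C))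
  (fun n x => prestrict _ (@snd_mono n) x) _).
move=> m n f x /=.
rewrite (prestrict_comp (phi:=dmap f) (psi:=fun a : 'I_m.+1 * 'I_m.+1 => a.2) _ _
          (fun a b h => dmono f _ _ (@snd_mono m a b h))).
rewrite (prestrict_comp (phi:=fun a : 'I_n.+1 * 'I_n.+1 => a.2)
          (psi:=fun a : 'I_m.+1 * 'I_m.+1 => (f a.1, f a.2)) _ _
          (fun a b h => dmono f _ _ (@snd_mono m a b h))).
by [].
Defined.

From Stdlib Require Import FunctionalExtensionality ProofIrrelevance Relations.
From mathcomp Require Import all_boot zify.
Set Implicit Arguments. Unset Strict Implicit. Unset Printing Implicit Defensive.

(* Both maps are simplicially homotopic to the map sending an n-simplex x of
   N C to the grid (i, j) |-> x (min i j): for the horizontal inclusion a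
   homotopy slides the cells below the diagonal from min to the first
   projection, and transposing the grid gives the vertical case.  Simplicially
   homotopic maps agree in the homotopy category, because the projection
   X x Delta[1] -> X is a weak equivalence of which both end inclusions are
   sections. *)

Lemma sMap_eq (X Y : sSet) (f g : sMap X Y) :
  (forall n (x : X n), smap f x = smap g x) -> f = g.
Proof.
case: f g => f hf [g hg] /= H.
have E : f = g.
  apply: functional_extensionality_dep => n.
  apply: functional_extensionality => x; exact: H.
by subst g; rewrite (proof_irrelevance _ hf hg).
Qed.

Lemma dcomp_cst0 m n (f : DMap m n) : dcomp (cst0 n) f = cst0 m.
Proof. exact: DMap_eq. Qed.

Lemma dcomp_cst1 m n (f : DMap m n) : dcomp (cst1 n) f = cst1 m.
Proof. exact: DMap_eq. Qed.

Section Cylinder.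

Variable X : sSet.

Definition cyl_proj : sMap (Prod X (Delta 1)) X :=
  @Build_sMap (Prod X (Delta 1)) X (fun n xa => xa.1) (fun m n f xa => erefl).

Definition cyl_in0 : sMap X (Prod X (Delta 1)).
Proof.
refine (@Build_sMap X (Prod X (Delta 1)) (fun n x => (x, cst0 n)) _).
by move=> m n f x /=; rewrite dcomp_cst0.
Defined.

Definition cyl_in1 : sMap X (Prod X (Delta 1)).
Proof.
refine (@Build_sMap X (Prod X (Delta 1)) (fun n x => (x, cst1 n)) _).
by move=> m n f x /=; rewrite dcomp_cst1.
Defined.

Lemma cyl_proj_in0 : scomp cyl_proj cyl_in0 = sid X.
Proof. exact: sMap_eq. Qed.

Lemma cyl_proj_in1 : scomp cyl_proj cyl_in1 = sid X.
Proof. exact: sMap_eq. Qed.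

End Cylinder.

Definition cyl_map (X Y : sSet) (s : sMap X Y) :
  sMap (Prod X (Delta 1)) (Prod Y (Delta 1)).
Proof.
refine (@Build_sMap (Prod X (Delta 1)) (Prod Y (Delta 1))
  (fun n xa => (s n xa.1, xa.2)) _).
by move=> m n f [x a] /=; rewrite snat.
Defined.

Lemma homotopic_scompr (X Y K : sSet) (s : sMap X Y) (u v : sMap Y K) :
  homotopic u v -> homotopic (scomp u s) (scomp v s).
Proof.
case=> H [H0 H1]; exists (scomp H (cyl_map s)).
by split=> n x /=; [rewrite H0 | rewrite H1].
Qed.

Lemma homotopic_scompl (X Y K : sSet) (t : sMap Y K) (u v : sMap X Y) :
  homotopic u v -> homotopic (scomp t u) (scomp t v).
Proof.
case=> H [H0 H1]; exists (scomp t H).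
by split=> n x /=; [rewrite H0 | rewrite H1].
Qed.

Lemma hrel_scompr (X Y K : sSet) (s : sMap X Y) (u v : sMap Y K) :
  hrel u v -> hrel (scomp u s) (scomp v s).
Proof.
elim=> [a b h | a | a b _ IH | a b c _ IH1 _ IH2].
- exact/rst_step/homotopic_scompr.
- exact: rst_refl.
- exact: rst_sym.
- exact: rst_trans IH2.
Qed.

Definition dmin n (a b : DMap n 1) : DMap n 1.
Proof.
refine (@Build_DMap n 1 (fun i => if (a i : nat) == 0 then ord0 else b i) _).
move=> i j hij; have ha := dmono a i j hij; have hb := dmono b i j hij.
case: eqP => // Hai; case: eqP => Haj //; lia.
Defined.

Lemma dmin_cst0 n (a : DMap n 1) : dmin a (cst0 n) = cst0 n.
Proof. by apply: DMap_eq => i /=; case: eqP. Qed.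

Lemma dmin_cst1 n (a : DMap n 1) : dmin a (cst1 n) = a.
Proof.
apply: DMap_eq => i /=; case: eqP => [a0 | an0]; apply: val_inj => //=.
by have := ltn_ord (a i); lia.
Qed.

Definition cyl_contract (X K : sSet) (h : sMap (Prod X (Delta 1)) K) :
  sMap (Prod (Prod X (Delta 1)) (Delta 1)) K.
Proof.
refine (@Build_sMap (Prod (Prod X (Delta 1)) (Delta 1)) K
  (fun n xab => h n (xab.1.1, dmin xab.1.2 xab.2)) _).
move=> m n f [[x a] b] /=.
by rewrite -(snat h); congr (h m (_, _)); apply: DMap_eq.
Defined.

Lemma homotopic_cyl_in0_proj (X K : sSet) (h : sMap (Prod X (Delta 1)) K) :
  homotopic (scomp (scomp h (cyl_in0 X)) (cyl_proj X)) h.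
Proof.
exists (cyl_contract h).
by split=> n [x a] /=; rewrite ?dmin_cst0 ?dmin_cst1.
Qed.

Lemma weq_cyl_proj (X : sSet) : weq (cyl_proj X).
Proof.
move=> K _; split.
  move=> h; exists (scomp h (cyl_in0 X)).
  exact/rst_step/homotopic_cyl_in0_proj.
move=> a b /(hrel_scompr (cyl_in0 X)).
have cancel_in0 (c : sMap X K) : scomp (scomp c (cyl_proj X)) (cyl_in0 X) = c.
  exact: sMap_eq.
by rewrite !cancel_in0.
Qed.

Lemma is_iso_sect_unique (D : Category) (a b : Ob D) (f : Hom a b)
  (g g' : Hom b a) :
  is_iso f -> compc f g = idc b -> compc f g' = idc b -> g = g'.
Proof.
case=> k [kf _] fg fg'.
by rewrite -(comp1c g) -(comp1c g') -kf -!compcA fg fg'.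
Qed.

Lemma homotopic_Ho_eq (X Y : sSet) (f g : sMap X Y) :
  homotopic f g -> Ho_eq f g.
Proof.
case=> H [H0 H1] D F Finv.
have -> : f = scomp H (cyl_in0 X) by apply: sMap_eq => n x; rewrite -H0.
have -> : g = scomp H (cyl_in1 X) by apply: sMap_eq => n x; rewrite -H1.
rewrite !Fmap_comp; congr (compc _ _).
apply: (is_iso_sect_unique (Finv _ _ _ (weq_cyl_proj X))).
  by rewrite -Fmap_comp cyl_proj_in0 Fmap_id.
by rewrite -Fmap_comp cyl_proj_in1 Fmap_id.
Qed.

Lemma prestrict_ext (C : Category) I J (leI : I -> I -> bool)
  (leJ : J -> J -> bool) (phi psi : J -> I)
  (hphi : forall i j, leJ i j -> leI (phi i) (phi j))
  (hpsi : forall i j, leJ i j -> leI (psi i) (psi j)) (P : PFun C leI) :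
  phi =1 psi -> prestrict phi hphi P = prestrict psi hpsi P.
Proof.
move=> /functional_extensionality E; subst psi; exact: prestrict_pi.
Qed.

Lemma prestrict_comp_ext (C : Category) I J1 J2 K (leI : I -> I -> bool)
  (leJ1 : J1 -> J1 -> bool) (leJ2 : J2 -> J2 -> bool) (leK : K -> K -> bool)
  (phi1 : J1 -> I) (psi1 : K -> J1) (phi2 : J2 -> I) (psi2 : K -> J2)
  (hphi1 : forall i j, leJ1 i j -> leI (phi1 i) (phi1 j))
  (hpsi1 : forall i j, leK i j -> leJ1 (psi1 i) (psi1 j))
  (hphi2 : forall i j, leJ2 i j -> leI (phi2 i) (phi2 j))
  (hpsi2 : forall i j, leK i j -> leJ2 (psi2 i) (psi2 j)) (P : PFun C leI) :
  (forall k, phi1 (psi1 k) = phi2 (psi2 k)) ->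
  prestrict psi1 hpsi1 (prestrict phi1 hphi1 P)
  = prestrict psi2 hpsi2 (prestrict phi2 hphi2 P).
Proof.
move=> E.
rewrite (prestrict_comp _ _ (fun i j e => hphi1 _ _ (hpsi1 i j e))).
rewrite (prestrict_comp _ _ (fun i j e => hphi2 _ _ (hpsi2 i j e))).
exact: prestrict_ext.
Qed.

Section Grids.

Variable C : Category.

Definition grid_min n (ij : 'I_n.+1 * 'I_n.+1) : 'I_n.+1 :=
  if (ij.1 <= ij.2)%N then ij.1 else ij.2.

Lemma grid_min_mono n (u v : 'I_n.+1 * 'I_n.+1) :
  gridle u v -> ordle (grid_min u) (grid_min v).
Proof.
case: u v => i j [i' j'] /andP [/= h1 h2]; rewrite /grid_min /ordle /=.
by case: ifP; case: ifP => /=; lia.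
Qed.

Lemma grid_min_nat m n (f : DMap m n) (ij : 'I_m.+1 * 'I_m.+1) :
  f (grid_min ij) = grid_min (f ij.1, f ij.2).
Proof.
case: ij => i j; rewrite /grid_min /=.
have := dmono f i j; have := dmono f j i.
case: (leqP i j) => Hij; case: (leqP (f i) (f j)) => Hf H1 H2 //; first lia.
by apply: val_inj => /=; have := H1 (ltnW Hij); lia.
Qed.

Definition incl_min : sMap (Nerve C) (diag (NCbi C)).
Proof.
refine (@Build_sMap (Nerve C) (diag (NCbi C))
  (fun n x => prestrict _ (@grid_min_mono n) x) _).
move=> m n f x /=; apply: prestrict_comp_ext => ij; exact: grid_min_nat.
Defined.

(* At vertex 0 of Delta[1] this is [grid_min], at vertex 1 the first
   projection: a cell (i, j) with j < i moves from j to i once [a] sends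
   j to 1. *)
Definition grid_slide n (a : DMap n 1) (ij : 'I_n.+1 * 'I_n.+1) : 'I_n.+1 :=
  if (ij.1 <= ij.2)%N || (0 < a ij.2)%N then ij.1 else ij.2.

Lemma grid_slide_mono n (a : DMap n 1) (u v : 'I_n.+1 * 'I_n.+1) :
  gridle u v -> ordle (grid_slide a u) (grid_slide a v).
Proof.
case: u v => i j [i' j'] /andP [/= h1 h2]; have := dmono a j j' h2.
rewrite /grid_slide /ordle /=.
by case: (leqP i j); case: (leqP i' j');
  case: (posnP (a j)); case: (posnP (a j')) => /=; lia.
Qed.

Lemma grid_slide_nat m n (f : DMap m n) (a : DMap n 1)
  (ij : 'I_m.+1 * 'I_m.+1) :
  f (grid_slide (dcomp a f) ij) = grid_slide a (f ij.1, f ij.2).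
Proof.
case: ij => i j; rewrite /grid_slide /=.
have := dmono f i j; have := dmono f j i.
case: (leqP i j) => Hij; case: (leqP (f i) (f j)) => Hf;
  case: (posnP (a (f j))) => Ha /= H1 H2 //; try lia.
by apply: val_inj => /=; have := H1 (ltnW Hij); lia.
Qed.

Definition slide_homotopy : sMap (Prod (Nerve C) (Delta 1)) (diag (NCbi C)).
Proof.
refine (@Build_sMap (Prod (Nerve C) (Delta 1)) (diag (NCbi C))
  (fun n xa => prestrict _ (@grid_slide_mono n xa.2) xa.1) _).
move=> m n f [x a] /=; apply: prestrict_comp_ext => ij; exact: grid_slide_nat.
Defined.

Lemma homotopic_incl_min_h : homotopic incl_min (incl_h C).
Proof.
exists slide_homotopy.
split=> n x /=; apply: prestrict_ext => -[i j].
  by rewrite /grid_slide /= orbF.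
by rewrite /grid_slide /= orbT.
Qed.

Lemma gridle_swap p (u v : 'I_p.+1 * 'I_p.+1) :
  gridle u v -> gridle (u.2, u.1) (v.2, v.1).
Proof. by rewrite /gridle andbC. Qed.

Definition transpose : sMap (diag (NCbi C)) (diag (NCbi C)).
Proof.
refine (@Build_sMap (diag (NCbi C)) (diag (NCbi C))
  (fun n x => prestrict _ (@gridle_swap n) x) _).
by move=> m n f x /=; apply: prestrict_comp_ext.
Defined.

Lemma transpose_incl_min : scomp transpose incl_min = incl_min.
Proof.
apply: sMap_eq => n x /=.
rewrite (prestrict_comp _ _ (fun u v e => grid_min_mono (gridle_swap e))).
apply: prestrict_ext => -[i j]; rewrite /grid_min /=.
by case: (leqP i j); case: (leqP j i) => //= *; apply: val_inj => /=; lia.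
Qed.

Lemma transpose_incl_h : scomp transpose (incl_h C) = incl_v C.
Proof. by apply: sMap_eq => n x /=; apply: prestrict_comp_ext. Qed.

End Grids.

Theorem proposition3p4 (C : Category) : Ho_eq (incl_h C) (incl_v C).
Proof.
move=> D F Finv.
have min_h := homotopic_incl_min_h C.
have min_v := homotopic_scompl (transpose C) min_h.
rewrite transpose_incl_min transpose_incl_h in min_v.
by rewrite -(homotopic_Ho_eq min_h Finv) (homotopic_Ho_eq min_v Finv).
Qed.
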